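(* Let $\sigma>0$, $\varepsilon>0$, $D=\ln(1/\varepsilon)+n\ln 8$, and $I=\{x\in(\mathbb{N}\cup\{0\})^n:\sum_{j=1}^n u(x_j)<D\}$. Then $$|I|\le\sum_{q=0}^n 2^{n-q}\binom{n}{n-q}\mathrm{Vol}(X_q),$$ where $X_q=\{x\in[0,+\infty)^q:\sum_{j=1}^q u(x_j)<D-(n-q)\Delta(\sigma)\}$ and $\mathrm{Vol}$ is $q$-dimensional Lebesgue measure.
   Context: $u(x)=\frac{x}{2}\ln\big(\frac{2}{e}x\big)-x\ln\sigma$ for $x>0$, $u(0)=0$; $r=\lfloor\sigma^2/2\rfloor$; $\Delta(\sigma)=\min\{u(r),u(r+1)\}$. *)

From HB Require Import structures.
From mathcomp Require Import all_boot all_order all_algebra.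
From mathcomp Require Import all_classical all_reals all_analysis.
Unset Printing Implicit Defensive.
Import Order.TTheory GRing.Theory Num.Theory.
Local Open Scope classical_set_scope.
Local Open Scope ring_scope.

(* u(x) = x/2 ln(2x/e) - x ln sigma for x > 0, u(0) = 0
   (u is only ever applied to nonnegative arguments; we set it to 0 for x <= 0). *)
Definition u {R : realType} (sigma x : R) : R :=
  if 0 < x then x / 2 * ln (2 / expR 1 * x) - x * ln sigma else 0.

Definition r_of {R : realType} (sigma : R) : nat := Num.truncn (sigma ^+ 2 / 2).

Definition Delta {R : realType} (sigma : R) : R :=
  Num.min (u sigma (r_of sigma)%:R) (u sigma (r_of sigma).+1%:R).

(* q-dimensional Lebesgue measure on q-tuples of reals, defined as the
   iterated (Fubini) product of the one-dimensional Lebesgue measure: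
   Vol_0 A = 1 if the empty tuple is in A, 0 otherwise;
   Vol_{q+1} A = \int dx Vol_q { t | (x :: t) \in A }. *)
Fixpoint vol {R : realType} (q : nat) : set (q.-tuple R) -> \bar R :=
  match q with
  | 0 => fun A => if `[< A [tuple] >] then 1%E else 0%E
  | q'.+1 => fun A =>
      (\int[@lebesgue_measure R]_x vol q' (fun t : q'.-tuple R => A (cons_tuple x t)))%E
  end.

Definition Dval {R : realType} (eps : R) (n : nat) : R :=
  ln (1 / eps) + n%:R * ln 8.

Definition Iset {R : realType} (sigma eps : R) (n : nat) : set (n.-tuple nat) :=
  [set x | \sum_(j < n) u sigma (tnth x j)%:R < Dval eps n].

Definition Xset {R : realType} (sigma eps : R) (n q : nat) : set (q.-tuple R) :=
  [set x | (forall j, 0 <= tnth x j) /\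
     \sum_(j < q) u sigma (tnth x j) < Dval eps n - (n - q)%:R * Delta sigma].

From HB Require Import structures.
From mathcomp Require Import all_boot all_order all_algebra.
From mathcomp Require Import all_classical all_reals all_analysis.
From mathcomp Require Import measurable_realfun ring lra zify.
Import Order.TTheory GRing.Theory Num.Theory.
Local Open Scope classical_set_scope.
Local Open Scope ring_scope.

(* Induction on n, with an arbitrary threshold c in place of D.  Split the
   lattice points according to their first coordinate k.  The function u
   decreases on [0, sigma^2/2] and increases beyond, so for k <> r, r + 1 the
   value u k dominates u on a unit cell, and these cells are pairwise disjoint;
   hence the points with first coordinate k <> r, r + 1 are counted by the
   Fubini integral defining Vol_{q+1}.  The two remaining values satisfy
   u k >= Delta(sigma) and contribute twice the bound for n - 1 with threshold
   c - Delta(sigma).  Pascal's rule for the weights 2^(n-q) C(n, q) reassembles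
   the bound for n. *)

Section u_shape.
Context {R : realType}.
Variable sigma : R.
Hypothesis sigma_gt0 : 0 < sigma.
Local Notation m := (sigma ^+ 2 / 2).

Lemma mulr_lnB_le (a b : R) : 0 < a -> 0 < b ->
  a * (ln b - ln a) <= b - a.
Proof.
move=> a0 b0; have := expR_ge1Dx (ln (b / a)).
rewrite lnK ?posrE ?divr_gt0 // lnM ?posrE ?invr_gt0 // lnV ?posrE // => h.
have := ler_wpM2l (ltW a0) h.
rewrite mulrDr mulr1 [a * (b / a)]mulrC divfK ?gt_eqF //; lra.
Qed.

Let m_gt0 : 0 < m.
Proof. by rewrite divr_gt0 ?exprn_gt0. Qed.

Lemma uE (x : R) : 0 < x -> u sigma x = x / 2 * (ln x - ln m - 1).
Proof.
move=> x0; rewrite /u x0.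
have e_gt0 : 0 < expR (1 : R) := expR_gt0 1.
have -> : ln (2 / expR 1 * x) = ln 2 - 1 + ln x.
  by rewrite !lnM ?posrE ?divr_gt0 ?invr_gt0 // lnV ?posrE // expRK.
have -> : ln m = ln sigma + ln sigma - ln 2.
  by rewrite lnM ?posrE ?invr_gt0 ?exprn_gt0 // lnV ?posrE // lnXn // mulr2n.
lra.
Qed.

Lemma u_nonpos (x : R) : x <= m -> u sigma x <= 0.
Proof.
move=> xm; have [x0|x_le0] := ltP 0 x; last by rewrite /u ltNge x_le0.
rewrite uE //; have : ln x <= ln m by rewrite ler_ln ?posrE.
by move=> ?; apply: mulr_ge0_le0; [rewrite divr_ge0 ?ltW|]; lra.
Qed.

Lemma u_nonincr (a b : R) : 0 < a -> a <= b -> b <= m -> u sigma b <= u sigma a.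
Proof.
move=> a0 ab bm; have b0 : 0 < b by lra.
have lnb_le : ln b <= ln m by rewrite ler_ln ?posrE.
have := mulr_lnB_le _ _ a0 b0.
have : 0 <= (b - a) * (ln m - ln b) by apply: mulr_ge0; lra.
rewrite !uE // !(mulrBr, mulrBl, mulrDr, mulrDl, mulr1, mul1r); lra.
Qed.

Lemma u_nondecr (a b : R) : m <= a -> a <= b -> u sigma a <= u sigma b.
Proof.
move=> ma ab; have a0 : 0 < a by have := m_gt0; lra.
have b0 : 0 < b by lra.
have lna_ge : ln m <= ln a by rewrite ler_ln ?posrE.
have := mulr_lnB_le _ _ b0 a0.
have : 0 <= (b - a) * (ln a - ln m) by apply: mulr_ge0; lra.
rewrite !uE // !(mulrBr, mulrBl, mulrDr, mulrDl, mulr1, mul1r); lra.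
Qed.

End u_shape.

Definition unit_cell {R : realType} (j : nat) : set R :=
  [set` `[j%:R, j%:R + 1[%R].

Section volume.
Context {R : realType}.
Local Notation mu := (@lebesgue_measure R).

(* Unlike [ge0_le_integral], no measurability is assumed: the sections
   integrated in [vol] are not known to be measurable. *)
Lemma le_integral_ge0 (f g : R -> \bar R) :
  (forall x, 0 <= f x)%E -> (forall x, f x <= g x)%E ->
  (\int[mu]_x f x <= \int[mu]_x g x)%E.
Proof.
move=> f0 fg; have g0 x : (0 <= g x)%E := le_trans (f0 x) (fg x).
rewrite !ge0_integralTE //; apply: ereal_sup_le => _ [h hf <-].
by exists h => //= x; exact: le_trans (hf x) (fg x).
Qed.

Lemma vol_ge0 q (A : set (q.-tuple R)) : (0 <= vol q A)%E.
Proof.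
elim: q A => [|q IH] A /=; first by case: ifP.
by apply: integral_ge0 => x _; exact: IH.
Qed.

Lemma le_vol q (A B : set (q.-tuple R)) : A `<=` B -> (vol q A <= vol q B)%E.
Proof.
elim: q A B => [|q IH] A B AB /=.
  case: (asboolP (A [tuple])) => [/AB BT|_]; last by case: ifP.
  by rewrite asboolT.
apply: le_integral_ge0 => x; first exact: vol_ge0.
by apply: IH => t; exact: AB.
Qed.

Lemma unit_cell_inj {i j : nat} {x : R} :
  unit_cell i x -> unit_cell j x -> i = j.
Proof.
rewrite /unit_cell /= !in_itv /= => /andP [ix xi] /andP [jx xj].
have : i%:R < j%:R + 1 :> R by lra.
have : j%:R < i%:R + 1 :> R by lra.
rewrite !natr1 !ltr_nat !ltnS => ji ij.
by apply/eqP; rewrite eqn_leq ij ji.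
Qed.

Lemma integral_cst_unit_cell (j : nat) (c : \bar R) :
  (\int[mu]_x (cst c \_ (unit_cell j)) x = c)%E.
Proof.
rewrite -integral_mkcond integral_cst; last exact: measurable_itv.
set L := (X in (c * X)%E); suff -> : L = 1%E by rewrite mule1.
have := @lebesgue_measure_itv R `[j%:R, j%:R + 1[%R.
by rewrite /= lte_fin ltrDl ltr01 -EFinD addrAC subrr add0r => <-.
Qed.

Lemma sum_le_integral_unit_cells (g : R -> \bar R) (s : seq nat)
    (c : nat -> \bar R) (a : nat -> nat) :
  uniq (map a s) -> (forall k, 0 <= c k)%E -> (forall x, 0 <= g x)%E ->
  (forall k x, k \in s -> unit_cell (a k) x -> (c k <= g x)%E) ->
  (\sum_(k <- s) c k <= \int[mu]_x g x)%E.
Proof.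
move=> a_uniq c0 g0 c_le_g.
pose F k : R -> \bar R := cst (c k) \_ (unit_cell (a k)).
have F0 k x : (0 <= F k x)%E by rewrite /F /patch; case: ifP => // _; exact: c0.
have -> : (\sum_(k <- s) c k = \int[mu]_x \sum_(k <- s) F k x)%E.
  have mF k : measurable_fun setT (F k).
    by apply/(measurable_restrictT _ _).1;
      [exact: measurable_itv | exact: measurable_cst].
  rewrite ge0_integral_sum //; apply: eq_bigr => k _.
  by rewrite integral_cst_unit_cell.
apply: le_integral_ge0 => [y|x]; first exact: sume_ge0.
elim: s a_uniq c_le_g => [|k s IH] /=; first by rewrite big_nil.
move=> /andP [ak_notin a_uniq] c_le_g; rewrite big_cons {1}/F /patch.
case: ifPn => [/set_mem xk|_]; last first.
  by rewrite add0e; apply: IH => // k' y k's; apply: c_le_g; rewrite inE k's orbT.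
rewrite big1_seq ?adde0; first by apply: c_le_g; rewrite ?inE ?eqxx.
move=> k' /andP [_ k's]; rewrite /F /patch; case: ifPn => // /set_mem xk'.
by move: ak_notin; rewrite (unit_cell_inj xk xk') map_f.
Qed.

End volume.

Definition sublevel {R : realType} (sigma : R) (q : nat) (c : R) :
    set (q.-tuple R) :=
  [set x | (forall j, 0 <= tnth x j) /\ \sum_(j < q) u sigma (tnth x j) < c].

Section cells.
Context {R : realType}.
Variable sigma : R.
Hypothesis sigma_gt0 : 0 < sigma.
Local Notation r := (r_of sigma).

(* Skipping the cell [r, r + 1), which contains the minimum point sigma^2/2
   of u, gives every k other than r and r + 1 its own cell, on which u is
   below u k. *)
Definition cell_index (k : nat) : nat := if (k < r)%N then k else k.-1.

Lemma r_of_itv : r%:R <= sigma ^+ 2 / 2 < r%:R + 1.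
Proof. by rewrite natr1; apply: truncn_itv; rewrite divr_ge0 ?sqr_ge0. Qed.

Lemma u_le_on_cell (k : nat) (x : R) : k != r -> k != r.+1 ->
  unit_cell (cell_index k) x -> 0 <= x /\ u sigma x <= u sigma k%:R.
Proof.
move=> kr kr1; rewrite /unit_cell /= in_itv /= => /andP [].
have /andP [r_le_m m_lt_r1] := r_of_itv.
rewrite /cell_index; case: ltnP => [k_lt_r|r_le_k] lo hi.
  have x0 : 0 <= x := le_trans (ler0n _ _) lo.
  have : k.+1%:R <= r%:R :> R by rewrite ler_nat.
  rewrite -natr1 => k1_le_r; split => //.
  have x_le_m : x <= sigma ^+ 2 / 2 by lra.
  have [->|k_gt0] := posnP k; last by apply: u_nonincr; rewrite ?ltr0n.
  by rewrite [u _ 0%:R]/u ltxx; apply: u_nonpos.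
have r1_le : r.+1%:R <= k.-1%:R :> R by rewrite ler_nat; lia.
have kE : k%:R = k.-1%:R + 1 :> R by rewrite natr1 prednK //; lia.
have r1_ge0 := ler0n R r.+1.
rewrite natr1 in m_lt_r1.
split; first lra.
by apply: u_nondecr => //; [apply: le_trans (ltW m_lt_r1) _ |]; lra.
Qed.

Lemma sum_vol_sublevel_le q c M (P : pred nat) :
  (forall k, P k -> k != r /\ k != r.+1) ->
  (\sum_(k < M | P k) vol q (sublevel sigma q (c - u sigma k%:R))
     <= vol q.+1 (sublevel sigma q.+1 c))%E.
Proof.
move=> P_off.
rewrite -(big_mkord P (fun k => vol q (sublevel sigma q (c - u sigma k%:R)))).
rewrite -big_filter.
apply: (sum_le_integral_unit_cells _ _ _ cell_index) => [||x|k x].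
- rewrite map_inj_in_uniq ?filter_uniq ?iota_uniq // => k1 k2.
  rewrite !mem_filter => /andP [/P_off [? ?] _] /andP [/P_off [? ?] _].
  by rewrite /cell_index; case: ifPn; case: ifPn; lia.
- by move=> k; exact: vol_ge0.
- exact: vol_ge0.
rewrite mem_filter => /andP [/P_off [kr kr1] _].
move=> /(u_le_on_cell _ _ kr kr1) [x0 ux_le].
apply: le_vol => t [t0 t_lt]; split.
  by move=> j; case: (unliftP ord0 j) => [j' ->|->]; rewrite ?tnthS ?tnth0.
rewrite big_ord_recl tnth0; under eq_bigr do rewrite tnthS.
lra.
Qed.

End cells.

Lemma count_comp_sum (T : eqType) (s : seq T) (h : T -> nat) M (P : pred nat) :
  (forall x, x \in s -> h x < M)%N ->
  count (P \o h) s = (\sum_(k < M | P k) count (fun x => h x == k) s)%N.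
Proof.
elim: s => [|x s IH] hs /=; first by rewrite big1.
rewrite IH => [|y ys]; last by apply: hs; rewrite inE ys orbT.
rewrite big_split /=; congr (_ + _)%N.
have hx : (h x < M)%N by apply: hs; rewrite inE eqxx.
have [Px|NPx] := boolP (P (h x)).
  rewrite (bigD1 (Ordinal hx)) //= eqxx big1 // => k /andP [_ /eqP k_neq].
  by case: eqP => // hxk; case: k_neq; apply: val_inj.
by rewrite big1 // => k Pk; case: eqP => // hxk; rewrite hxk Pk in NPx.
Qed.

Lemma size_split_count (T : eqType) (s : seq T) (h : T -> nat) k :
  size s = (count (fun x => h x == k) s + count (fun x => h x == k.+1) s +
            count (fun x => (h x != k) && (h x != k.+1)) s)%N.
Proof.
elim: s => [|x s IH] //=; rewrite IH.
by have [->|_] := eqVneq (h x) k; [rewrite (ltn_eqF (ltnSn k)) | case: eqP]; lia.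
Qed.

Lemma sum_tnth_behead (V : nmodType) (T : Type) n (F : T -> V)
    (x : n.+1.-tuple T) :
  \sum_(j < n.+1) F (tnth x j) =
  F (thead x) + \sum_(j < n) F (tnth [tuple of behead x] j).
Proof.
rewrite big_ord_recl; congr (_ + _); apply: eq_bigr => j _.
by rewrite !(tnth_nth (thead x)) /= nth_behead.
Qed.

Lemma weight_pascal (n q : nat) : (q < n)%N ->
  (2 ^ (n.+1 - q.+1) * 'C(n.+1, n.+1 - q.+1) =
   2 * (2 ^ (n - q.+1) * 'C(n, n - q.+1)) + 2 ^ (n - q) * 'C(n, n - q))%N.
Proof.
move=> q_lt_n; rewrite subSS.
have -> : (n - q = (n - q.+1).+1)%N by lia.
by rewrite binS expnS; ring.
Qed.

Section vol_bound.
Context {R : realType}.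
Variable sigma : R.
Local Notation X := (sublevel sigma).
Local Notation D := (Delta sigma).

Definition weight (n q : nat) : \bar R := ((2 ^ (n - q) * 'C(n, n - q))%:R)%:E.

Definition vol_bound_term (n : nat) (c : R) (q : nat) : \bar R :=
  (weight n q * vol q (X q (c - (n - q)%:R * D)))%E.

Definition lifted_term (n : nat) (c : R) (q : nat) : \bar R :=
  (weight n q * vol q.+1 (X q.+1 (c - (n - q)%:R * D)))%E.

Definition vol_bound (n : nat) (c : R) : \bar R :=
  (\sum_(q < n.+1) vol_bound_term n c q)%E.

Lemma weight_ge0 n q : (0 <= weight n q)%E.
Proof. by rewrite lee_fin ler0n. Qed.

Lemma vol_bound_ge0 n c : (0 <= vol_bound n c)%E.
Proof. by apply: sume_ge0 => q _; rewrite mule_ge0 ?weight_ge0 ?vol_ge0. Qed.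

Lemma le_sublevel q c c' : c <= c' -> X q c `<=` X q c'.
Proof. by move=> cc' x [x0 x_lt]; split => //; lra. Qed.

Lemma le_vol_bound n c c' : c <= c' -> (vol_bound n c <= vol_bound n c')%E.
Proof.
move=> cc'; apply: lee_sum => q _; apply: lee_wpmul2l; first exact: weight_ge0.
by apply/le_vol/le_sublevel; lra.
Qed.

Lemma vol_bound_succ n c : vol_bound n.+1 c =
  (vol_bound n (c - D) + vol_bound n (c - D) +
   \sum_(q < n.+1) lifted_term n c q)%E.
Proof.
rewrite /vol_bound -!(big_mkord xpredT).
rewrite big_nat_recl // big_nat_recr //= big_nat_recl // big_nat_recr //=.
have term0 : vol_bound_term n.+1 c 0 =
    (vol_bound_term n (c - D) 0 + vol_bound_term n (c - D) 0)%E.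
  rewrite /vol_bound_term /weight !subn0 !binn !muln1 -ge0_muleDl ?weight_ge0 //.
  rewrite -EFinD -natrD expnS mul2n addnn; congr (_ * vol 0 (X 0 _))%E.
  by rewrite -natr1; lra.
have termS q : (q < n)%N -> vol_bound_term n.+1 c q.+1 =
    (vol_bound_term n (c - D) q.+1 + vol_bound_term n (c - D) q.+1 +
     lifted_term n c q)%E.
  move=> q_lt_n; rewrite /vol_bound_term /lifted_term /weight.
  have -> : c - D - (n - q.+1)%:R * D = c - (n.+1 - q.+1)%:R * D.
    by rewrite subSS (_ : n - q = (n - q.+1).+1)%N -?natr1; [lra|lia].
  rewrite subSS -!ge0_muleDl ?vol_ge0 ?lee_fin ?addr_ge0 //; congr (_ * _)%E.
  by rewrite -!EFinD -!natrD -subSS weight_pascal // mul2n addnn.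
have termn : vol_bound_term n.+1 c n.+1 = lifted_term n c n.
  by rewrite /vol_bound_term /lifted_term /weight !subnn !bin0.
rewrite term0 termn big_nat_cond.
under eq_bigr => q /andP [/andP [_ q_lt_n] _] do rewrite termS //.
rewrite -big_nat_cond !big_split /=.
by rewrite [in RHS](addrACA (vol_bound_term _ _ 0)) -!addrA.
Qed.

End vol_bound.

Section counting.
Context {R : realType}.
Variable sigma : R.
Hypothesis sigma_gt0 : 0 < sigma.
Local Notation r := (r_of sigma).

Definition card_le_vol_bound (n : nat) : Prop :=
  forall c (s : seq (n.-tuple nat)), uniq s ->
  (forall x, x \in s -> \sum_(j < n) u sigma (tnth x j)%:R < c) ->
  (((size s)%:R)%:E <= vol_bound sigma n c)%E.

Lemma card_le_vol_bound0 : card_le_vol_bound 0.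
Proof.
move=> c [|x [|y s]] s_uniq s_lt /=; first exact: vol_bound_ge0.
  have := s_lt x (mem_head _ _); rewrite big_ord0 => c_gt0.
  rewrite /vol_bound big_ord1 /vol_bound_term /weight /= asboolT ?mule1 //.
  by split; [case | rewrite big_ord0 mul0r subr0].
by move: s_uniq; rewrite /= (tuple0 x) (tuple0 y) inE eqxx.
Qed.

Lemma card_fibre_le n c (s : seq (n.+1.-tuple nat)) k :
  card_le_vol_bound n -> uniq s ->
  (forall x, x \in s -> \sum_(j < n.+1) u sigma (tnth x j)%:R < c) ->
  (((count (fun x => thead x == k) s)%:R)%:E
     <= vol_bound sigma n (c - u sigma k%:R))%E.
Proof.
move=> IH s_uniq s_lt.
rewrite -size_filter -(size_map (fun x : n.+1.-tuple nat => [tuple of behead x])).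
apply: IH.
  rewrite map_inj_in_uniq ?filter_uniq // => x y.
  rewrite !mem_filter => /andP [/eqP hx _] /andP [/eqP hy _] /(congr1 val) e.
  rewrite (tuple_eta x) (tuple_eta y); apply: val_inj => /=.
  by rewrite hx hy; congr (_ :: _).
move=> y /mapP [x]; rewrite mem_filter => /andP [/eqP hx xs] ->.
have := s_lt x xs; rewrite (sum_tnth_behead _ _ _ (fun t : nat => u sigma t%:R)).
by rewrite hx; lra.
Qed.

Lemma sum_vol_bound_off_peak_le n c M (P : pred nat) :
  (forall k, P k -> k != r /\ k != r.+1) ->
  (\sum_(k < M | P k) vol_bound sigma n (c - u sigma k%:R)
     <= \sum_(q < n.+1) lifted_term sigma n c q)%E.
Proof.
move=> P_off; rewrite /vol_bound exchange_big /=; apply: lee_sum => q _.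
rewrite /vol_bound_term /lifted_term -ge0_sume_distrr => [|k _]; last first.
  exact: vol_ge0.
apply: lee_wpmul2l; first exact: weight_ge0.
under eq_bigr do rewrite -addrA [- _ + _]addrC addrA.
exact: sum_vol_sublevel_le.
Qed.

Lemma card_le_vol_bound_succ n : card_le_vol_bound n -> card_le_vol_bound n.+1.
Proof.
move=> IH c s s_uniq s_lt.
pose M := (\max_(x <- s) (thead x).+1)%N.
have thead_lt x : x \in s -> (thead x < M)%N.
  by move=> xs; exact: (@leq_bigmax_seq _ _ predT (fun x => (thead x).+1)).
pose P k := (k != r) && (k != r.+1).
have fibre_le k := card_fibre_le _ _ _ k IH s_uniq s_lt.
have Delta_le_r : Delta sigma <= u sigma r%:R by rewrite /Delta ge_min lexx.
have Delta_le_r1 : Delta sigma <= u sigma r.+1%:R.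
  by rewrite /Delta ge_min lexx orbT.
rewrite (size_split_count _ s (fun x => thead x) r).
rewrite (@count_comp_sum _ s _ M P thead_lt).
rewrite !natrD !EFinD natr_sum -sumEFin vol_bound_succ.
apply: leeD; first apply: leeD.
- by apply: le_trans (fibre_le r) _; apply: le_vol_bound; lra.
- by apply: le_trans (fibre_le r.+1) _; apply: le_vol_bound; lra.
apply: le_trans (sum_vol_bound_off_peak_le n c M P _); last by move=> k /andP.
by apply: lee_sum => k _; exact: fibre_le.
Qed.

Lemma all_card_le_vol_bound n : card_le_vol_bound n.
Proof.
by elim: n => [|n]; [exact: card_le_vol_bound0 | exact: card_le_vol_bound_succ].
Qed.

End counting.

Theorem lemma11 (R : realType) (sigma eps : R) (n : nat) :
  0 < sigma -> 0 < eps ->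
  (\esum_(x in Iset sigma eps n) 1 <=
   \sum_(q < n.+1) ((2 ^ (n - q) * 'C(n, n - q))%:R)%:E * vol q (Xset sigma eps n q))%E.
Proof.
move=> sigma_gt0 _; apply: ge_ereal_sup => _ [A [finA AI] <-].
rewrite fsbig_finite //= -[X in (_ <= X)%E]/(vol_bound sigma n (Dval eps n)).
have sum1 (t : seq (n.-tuple nat)) :
    (\sum_(x <- t) 1 = (size t)%:R%:E :> \bar R)%E.
  by rewrite -sum1_size natr_sum sumEFin.
rewrite sum1; apply: (all_card_le_vol_bound _ sigma_gt0 n (Dval eps n)) => [|x].
  exact: finmap.fset_uniq.
by rewrite in_fset_set // inE => /AI.
Qed.
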